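(* Let $(Z,Z_{ac},h)$ be a normal accretive operator space and define, for $z\in M_n(Z)$, $\nu_{max}^n(z)=\inf\{h_n(z+p):p\in Z_{ac}^n\}$. Then $\nu_{max}=\{\nu_{max}^n\}$ is a $\mathbb{C}$-proper matrix gauge which induces $(Z,Z_{ac},h)$, i.e. $Z_{ac}^n=\{z:\nu_{max}^n(-z)=0\}$ and $h_n(z)=\max\{\nu_{max}^n(z),\nu_{max}^n(-z)\}$ for all $n$ and $z\in M_n(Z)$.
   Context: For a complex vector space $Z$, $M_n(Z)$ is the $n\times n$ matrices over $Z$. A cone is a set $C$ with $C+C\subseteq C$, $tC\subseteq C$ for $t\ge0$; a matrix cone is a sequence of cones $C_n\subseteq M_n(Z)$ with $X^*C_nX\subseteq C_k$ for scalar $X\in M_{n,k}$; it is $\mathbb{C}$-proper if $C_1\cap-C_1\cap iC_1\cap-iC_1=\{0\}$, making $(Z,Z_{ac})$ an accretive matrix-ordered vector space. A matrix gauge is a sequence $\{\nu_n:M_n(Z)\to[0,\infty)\}$ with $\nu_n(x+y)\le\nu_n(x)+\nu_n(y)$, $\nu_n(tx)=t\nu_n(x)$ ($t\ge0$), $\nu_k(X^*AX)\le\|X\|^2\nu_n(A)$, $\nu_{n+m}(A\oplus B)=\max\{\nu_n(A),\nu_m(B)\}$; it is $\mathbb{C}$-proper if $\nu_1(i^kz)=0$ for $k=0,1,2,3$ implies $z=0$. A hermitian matrix gauge is a $\mathbb{C}$-proper matrix gauge with $h_n(tz)=|t|h_n(z)$ for real $t$. $Z_{ac}$ is $h$-closed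 if $z_k\in Z_{ac}^n$, $h_n(z_k-z)\to0$ imply $z\in Z_{ac}^n$. $(Z,Z_{ac},h)$ is a normal accretive operator space if $(Z,Z_{ac})$ is an accretive matrix-ordered vector space, $h$ is a hermitian matrix gauge, $Z_{ac}$ is $h$-closed, and $y-x,\ z-y\in Z_{ac}^n$ imply $h_n(y)\le\max\{h_n(x),h_n(z)\}$. A matrix gauge $\nu$ induces $(Z,Z_{ac},h)$ if $Z_{ac}^n=\{z:\nu_n(-z)=0\}$ and $h_n(z)=\max\{\nu_n(z),\nu_n(-z)\}$ for all $n,z$. *)

From Stdlib Require Import Reals ClassicalEpsilon.
From mathcomp Require Import ssreflect ssrfun ssrbool eqtype ssrnat seq fintype bigop.

Set Implicit Arguments.
Unset Strict Implicit.

Local Open Scope R_scope.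

Definition C := (R * R)%type.
Definition C0 : C := (0, 0).
Definition C1 : C := (1, 0).
Definition Ci : C := (0, 1).
Definition RtoC (t : R) : C := (t, 0).
Definition Cadd (a b : C) : C := (fst a + fst b, snd a + snd b).
Definition Cmul (a b : C) : C :=
  (fst a * fst b - snd a * snd b, fst a * snd b + snd a * fst b).
Definition Copp (a : C) : C := (- fst a, - snd a).
Definition Cconj (a : C) : C := (fst a, - snd a).
Definition Cnorm2 (a : C) : R := fst a * fst a + snd a * snd a.

Record CVS := {
  car :> Type;
  vadd : car -> car -> car;
  vzero : car;
  vopp : car -> car;
  vscal : C -> car -> car;
  vaddA : forall x y z, vadd x (vadd y z) = vadd (vadd x y) z;
  vaddC : forall x y, vadd x y = vadd y x;
  vadd0 : forall x, vadd vzero x = x;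
  vaddN : forall x, vadd (vopp x) x = vzero;
  vscal1 : forall x, vscal C1 x = x;
  vscalA : forall a b x, vscal a (vscal b x) = vscal (Cmul a b) x;
  vscalDv : forall a x y, vscal a (vadd x y) = vadd (vscal a x) (vscal a y);
  vscalDs : forall a b x, vscal (Cadd a b) x = vadd (vscal a x) (vscal b x)
}.

Definition Mat (Z : CVS) (n k : nat) := 'I_n -> 'I_k -> Z.
Definition SMat (n k : nat) := 'I_n -> 'I_k -> C.

Section MatOps.
Variable Z : CVS.

Definition madd n (A B : Mat Z n n) : Mat Z n n := fun i j => vadd (A i j) (B i j).
Definition mopp n (A : Mat Z n n) : Mat Z n n := fun i j => vopp (A i j).
Definition msub n (A B : Mat Z n n) : Mat Z n n := madd A (mopp B).
Definition mscal n (a : C) (A : Mat Z n n) : Mat Z n n := fun i j => vscal a (A i j).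
Definition mzero n : Mat Z n n := fun _ _ => vzero Z.

(* X^* A X, for X in M_{n,k}(C) and A in M_n(Z):
   (X^* A X)_{ij} = sum_{p,q} conj(X_{pi}) X_{qj} A_{pq} *)
Definition congr_mx n k (X : SMat n k) (A : Mat Z n n) : Mat Z k k :=
  fun i j => \big[@vadd Z / vzero Z]_(p < n) \big[@vadd Z / vzero Z]_(q < n)
               vscal (Cmul (Cconj (X p i)) (X q j)) (A p q).

Definition dsum n m (A : Mat Z n n) (B : Mat Z m m) : Mat Z (n + m) (n + m) :=
  fun i j => match split i, split j with
             | inl a, inl b => A a b
             | inr a, inr b => B a b
             | _, _ => vzero Z
             end.
End MatOps.

Definition smx_apply n k (X : SMat n k) (v : 'I_k -> C) : 'I_n -> C :=
  fun p => \big[Cadd/C0]_(q < k) Cmul (X p q) (v q).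
Definition cvnorm k (v : 'I_k -> C) : R := sqrt (\big[Rplus/0]_(q < k) Cnorm2 (v q)).

Definition Rsup (E : R -> Prop) : R := epsilon (inhabits 0) (fun r => is_lub E r).
Definition is_lower_bound (E : R -> Prop) (m : R) := forall x, E x -> m <= x.
Definition is_glb (E : R -> Prop) (m : R) :=
  is_lower_bound E m /\ forall b, is_lower_bound E b -> b <= m.
Definition Rinf (E : R -> Prop) : R := epsilon (inhabits 0) (fun r => is_glb E r).

Definition opnorm n k (X : SMat n k) : R :=
  Rsup (fun r => exists v : 'I_k -> C, cvnorm v <= 1 /\ r = cvnorm (smx_apply X v)).

Section Cones.
Variable Z : CVS.

Definition is_cone n (K : Mat Z n n -> Prop) :=
  (forall x y, K x -> K y -> K (madd x y)) /\
  (forall t x, 0 <= t -> K x -> K (mscal (RtoC t) x)).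

Definition is_matrix_cone (K : forall n, Mat Z n n -> Prop) :=
  (forall n, (0 < n)%nat -> is_cone (K n)) /\
  (forall n k (X : SMat n k) (A : Mat Z n n), (0 < n)%nat -> (0 < k)%nat ->
      K n A -> K k (congr_mx X A)).

(* C_1 ∩ -C_1 ∩ iC_1 ∩ -iC_1 = {0} *)
Definition cone_CProper (K : forall n, Mat Z n n -> Prop) :=
  forall z : Mat Z 1 1,
    (K 1%nat z /\
     (exists w, K 1%nat w /\ z = mscal (Copp C1) w) /\
     (exists w, K 1%nat w /\ z = mscal Ci w) /\
     (exists w, K 1%nat w /\ z = mscal (Copp Ci) w)) <-> z = @mzero Z 1%nat.

Definition accretive_mosp (K : forall n, Mat Z n n -> Prop) :=
  is_matrix_cone K /\ cone_CProper K.

Definition is_matrix_gauge (nu : forall n, Mat Z n n -> R) :=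
  (forall n (x : Mat Z n n), (0 < n)%nat -> 0 <= nu n x) /\
  (forall n (x y : Mat Z n n), (0 < n)%nat -> nu n (madd x y) <= nu n x + nu n y) /\
  (forall n t (x : Mat Z n n), (0 < n)%nat -> 0 <= t ->
      nu n (mscal (RtoC t) x) = t * nu n x) /\
  (forall n k (X : SMat n k) (A : Mat Z n n), (0 < n)%nat -> (0 < k)%nat ->
      nu k (congr_mx X A) <= (opnorm X) ^ 2 * nu n A) /\
  (forall n m (A : Mat Z n n) (B : Mat Z m m), (0 < n)%nat -> (0 < m)%nat ->
      nu (n + m)%nat (dsum A B) = Rmax (nu n A) (nu m B)).

Definition gauge_CProper (nu : forall n, Mat Z n n -> R) :=
  forall z : Mat Z 1 1,
    nu 1%nat z = 0 -> nu 1%nat (mscal Ci z) = 0 ->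
    nu 1%nat (mscal (Copp C1) z) = 0 -> nu 1%nat (mscal (Copp Ci) z) = 0 ->
    z = @mzero Z 1%nat.

Definition is_CProper_matrix_gauge nu := is_matrix_gauge nu /\ gauge_CProper nu.

Definition is_hermitian_matrix_gauge (h : forall n, Mat Z n n -> R) :=
  is_CProper_matrix_gauge h /\
  (forall n t (z : Mat Z n n), (0 < n)%nat -> h n (mscal (RtoC t) z) = Rabs t * h n z).

Definition h_closed (K : forall n, Mat Z n n -> Prop) (h : forall n, Mat Z n n -> R) :=
  forall n (zs : nat -> Mat Z n n) (z : Mat Z n n), (0 < n)%nat ->
    (forall k, K n (zs k)) -> Un_cv (fun k => h n (msub (zs k) z)) 0 -> K n z.

Definition normal_accretive_operator_space
    (K : forall n, Mat Z n n -> Prop) (h : forall n, Mat Z n n -> R) :=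
  accretive_mosp K /\ is_hermitian_matrix_gauge h /\ h_closed K h /\
  (forall n (x y z : Mat Z n n), (0 < n)%nat ->
     K n (msub y x) -> K n (msub z y) -> h n y <= Rmax (h n x) (h n z)).

Definition induces (nu : forall n, Mat Z n n -> R)
    (K : forall n, Mat Z n n -> Prop) (h : forall n, Mat Z n n -> R) :=
  forall n, (0 < n)%nat ->
    (forall z : Mat Z n n, K n z <-> nu n (mopp z) = 0) /\
    (forall z : Mat Z n n, h n z = Rmax (nu n z) (nu n (mopp z))).

Definition nu_max (K : forall n, Mat Z n n -> Prop) (h : forall n, Mat Z n n -> R)
    n (z : Mat Z n n) : R :=
  Rinf (fun r => exists p, K n p /\ r = h n (madd z p)).
End Cones.

From Pilot Require Import Defs.
From Stdlib Require Import Reals Lra ClassicalEpsilon FunctionalExtensionality.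
From HB Require Import structures.
From mathcomp Require Import ssreflect ssrfun ssrbool eqtype ssrnat seq fintype bigop.
(* Re-import so that [C0], [C1] denote the complex constants, not the
   homonyms from Reals and Micromega. *)
Import Pilot.Defs.
Set Implicit Arguments.
Unset Strict Implicit.
Local Open Scope R_scope.

(* nu_max is a gauge because the defining infimum of z + p over the cone
   inherits subadditivity, homogeneity and the congruence bound from h, the
   cone being stable under all these operations. The cone is the zero set
   of z |-> nu_max(-z): one direction takes p = z, the other takes a
   sequence p_k in the cone with h(p_k - z) -> 0 and uses h-closedness.
   Finally h(z) <= max(nu_max(z), nu_max(-z)) is the normality axiom applied
   to z - q <= z <= z + p with p, q near-optimal for z and -z. *)

Lemma Rinf_glb (E : R -> Prop) m :
  (exists x, E x) -> is_lower_bound E m -> is_glb E (Rinf E).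
Proof.
move=> [x Ex] lbE.
suff [g glbE] : exists g, is_glb E g by exact: (epsilon_spec _ _ (ex_intro _ g glbE)).
have bnd : bound (fun y => E (- y)) by exists (- m) => y Ey; have := lbE _ Ey; lra.
have nonempty : exists y, E (- y) by exists (- x); rewrite Ropp_involutive.
have [l [ub lub]] := completeness _ bnd nonempty.
exists (- l); split.
- move=> y Ey; have : - y <= l by apply: ub; rewrite Ropp_involutive. lra.
- move=> b lbb; have : l <= - b by apply: lub => y Ey; have := lbb _ Ey; lra. lra.
Qed.

Lemma glb_approx E m e : is_glb E m -> 0 < e -> exists x, E x /\ x < m + e.
Proof.
move=> [lb glb] He; apply: NNPP => none.
have : m + e <= m by apply: glb => x Ex; apply: Rnot_lt_le => Hx; apply: none; exists x.
lra.
Qed.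

Lemma Cpair_eq (a b : C) : fst a = fst b -> snd a = snd b -> a = b.
Proof. by case: a => ? ?; case: b => ? ? /= -> ->. Qed.

Lemma CaddA : associative Cadd. Proof. by move=> a b c; apply: Cpair_eq => /=; ring. Qed.
Lemma CaddC : commutative Cadd. Proof. by move=> a b; apply: Cpair_eq => /=; ring. Qed.
Lemma Cadd0 : left_id C0 Cadd. Proof. by move=> a; apply: Cpair_eq => /=; ring. Qed.
HB.instance Definition _ := Monoid.isComLaw.Build C C0 Cadd CaddA CaddC Cadd0.

Lemma RplusA : associative Rplus. Proof. by move=> *; ring. Qed.
Lemma RplusC : commutative Rplus. Proof. by move=> *; ring. Qed.
Lemma Rplus0 : left_id 0 Rplus. Proof. by move=> *; ring. Qed.
HB.instance Definition _ := Monoid.isComLaw.Build R 0 Rplus RplusA RplusC Rplus0.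

Lemma Cmul_bool (c : bool) (x : C) : Cmul (if c then C1 else C0) x = if c then x else C0.
Proof. by case: c; apply: Cpair_eq => /=; ring. Qed.

Lemma Cnorm2_0 : Cnorm2 C0 = 0. Proof. by rewrite /Cnorm2 /=; ring. Qed.

Lemma split_lshift n m (a : 'I_n) : split (lshift m a) = inl a.
Proof. exact: (unsplitK (inl a)). Qed.
Lemma split_rshift n m (a : 'I_m) : split (rshift n a) = inr a.
Proof. exact: (unsplitK (inr a)). Qed.
Lemma lshift_neq_rshift n m (a : 'I_n) (b : 'I_m) : (lshift m a == rshift n b) = false.
Proof. by apply/eqP => /(congr1 split); rewrite split_lshift split_rshift. Qed.

Section VectorSpace.
Variable Z : CVS.
HB.instance Definition _ :=
  Monoid.isComLaw.Build (car Z) (vzero Z) (@vadd Z) (@vaddA Z) (@vaddC Z) (@vadd0 Z).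

Local Notation "x + y" := (vadd x y).
Local Notation "- x" := (vopp x).
Local Notation "0" := (vzero Z).

Lemma vaddr0 (x : Z) : x + 0 = x. Proof. by rewrite vaddC vadd0. Qed.
Lemma vaddNr (x : Z) : x + - x = 0. Proof. by rewrite vaddC vaddN. Qed.
Lemma vaddrI (a x y : Z) : a + x = a + y -> x = y.
Proof. by move=> H; rewrite -(vadd0 x) -(vaddN a) -vaddA H vaddA vaddN vadd0. Qed.
Lemma voppK (x : Z) : - - x = x.
Proof. by apply: (@vaddrI (- x)); rewrite vaddNr vaddN. Qed.
Lemma voppD (x y : Z) : - (x + y) = - x + - y.
Proof.
apply: (@vaddrI (x + y)); rewrite vaddNr [- x + _]vaddC vaddA -[x + y + _]vaddA.
by rewrite vaddNr vaddr0 vaddNr.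
Qed.
Lemma vscal0 a : vscal a 0 = 0.
Proof. by apply: (@vaddrI (vscal a 0)); rewrite -vscalDv !vaddr0. Qed.
Lemma vscal0s (x : Z) : vscal C0 x = 0.
Proof.
apply: (@vaddrI (vscal C0 x)); rewrite -vscalDs vaddr0.
by have -> : Cadd C0 C0 = C0 by apply: Cpair_eq => /=; ring.
Qed.
Lemma vscalN1 (x : Z) : vscal (Copp C1) x = - x.
Proof.
apply: (@vaddrI x); rewrite vaddNr -{1}(vscal1 x) -vscalDs.
have -> : Cadd C1 (Copp C1) = C0 by apply: Cpair_eq => /=; ring.
exact: vscal0s.
Qed.
Lemma vscal_bool (b c : bool) (x : Z) :
  vscal (Cmul (Cconj (if b then C1 else C0)) (if c then C1 else C0)) x =
  if b && c then x else 0.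
Proof.
have -> : Cconj (if b then C1 else C0) = if b then C1 else C0
  by case: b; apply: Cpair_eq => /=; ring.
by rewrite Cmul_bool; case: b c => [] [] /=; rewrite ?vscal1 ?vscal0s.
Qed.

Lemma mx_ext n k (A B : Mat Z n k) : (forall i j, A i j = B i j) -> A = B.
Proof. by move=> AB; do 2![apply: functional_extensionality => ?]; exact: AB. Qed.

Local Ltac entrywise :=
  apply: mx_ext => i j; rewrite /msub /madd /mopp /mscal /mzero.

Lemma maddr0 n (A : Mat Z n n) : madd A (@mzero Z n) = A.
Proof. entrywise; exact: vaddr0. Qed.
Lemma maddNr n (A : Mat Z n n) : madd (mopp A) A = @mzero Z n.
Proof. entrywise; exact: vaddN. Qed.
Lemma maddACA n (x y p q : Mat Z n n) :
  madd (madd x y) (madd p q) = madd (madd x p) (madd y q).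
Proof. entrywise; rewrite !vaddA; congr vadd; rewrite -!vaddA; congr vadd; exact: vaddC. Qed.
Lemma moppD n (A B : Mat Z n n) : mopp (madd A B) = madd (mopp A) (mopp B).
Proof. entrywise; exact: voppD. Qed.
Lemma moppK n (A : Mat Z n n) : mopp (mopp A) = A.
Proof. entrywise; exact: voppK. Qed.
Lemma moppE n (A : Mat Z n n) : mopp A = mscal (Copp C1) A.
Proof. by entrywise; rewrite vscalN1. Qed.
Lemma msubE n (A B : Mat Z n n) : msub A B = madd (mopp B) A.
Proof. entrywise; exact: vaddC. Qed.
Lemma msub_addKl n (z p : Mat Z n n) : msub (madd z p) z = p.
Proof. by entrywise; rewrite vaddC vaddA vaddN vadd0. Qed.
Lemma msub_subKl n (z q : Mat Z n n) : msub z (madd z (mopp q)) = q.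
Proof. by entrywise; rewrite voppD voppK vaddA vaddNr vadd0. Qed.
Lemma mscal0 n (A : Mat Z n n) : mscal (RtoC 0) A = @mzero Z n.
Proof. entrywise; exact: vscal0s. Qed.
Lemma mscalDr n a (A B : Mat Z n n) : mscal a (madd A B) = madd (mscal a A) (mscal a B).
Proof. entrywise; exact: vscalDv. Qed.
Lemma mscal1 n (A : Mat Z n n) : mscal C1 A = A.
Proof. entrywise; exact: vscal1. Qed.
Lemma mopp_mscal n a (A : Mat Z n n) : mopp (mscal a A) = mscal (Copp a) A.
Proof.
entrywise; rewrite -vscalN1 vscalA; congr vscal.
by apply: Cpair_eq => /=; ring.
Qed.
Lemma mscalK n a b (A : Mat Z n n) : Cmul a b = C1 -> mscal a (mscal b A) = A.
Proof. by move=> ab; entrywise; rewrite vscalA ab vscal1. Qed.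

Lemma congr_mxDr n k (X : SMat n k) (A B : Mat Z n n) :
  congr_mx X (madd A B) = madd (congr_mx X A) (congr_mx X B).
Proof.
apply: mx_ext => i j; rewrite /congr_mx /madd -big_split /=.
by apply: eq_bigr => p _; rewrite -big_split; apply: eq_bigr => q _; rewrite vscalDv.
Qed.

Lemma congr_mx0 n k (X : SMat n k) : congr_mx X (@mzero Z n) = @mzero Z k.
Proof.
apply: mx_ext => i j; rewrite /congr_mx big1 // => p _.
by rewrite big1 // => q _; rewrite vscal0.
Qed.

Lemma congr_mx_bool n k (P : 'I_k -> 'I_n -> bool) (A : Mat Z n n) i j :
  congr_mx (fun p i => if P i p then C1 else C0) A i j =
  \big[@vadd Z/0]_(p < n) \big[@vadd Z/0]_(q < n) (if P i p && P j q then A p q else 0).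
Proof. by apply: eq_bigr => p _; apply: eq_bigr => q _; rewrite vscal_bool. Qed.

Lemma sum_delta n (a : 'I_n) (F : 'I_n -> Z) :
  \big[@vadd Z/0]_(p < n) (if p == a then F p else 0) = F a.
Proof. by rewrite -big_mkcond big_pred1_eq. Qed.

(* The 0/1 matrix X of the coordinate embedding C^k -> C^N given by f, and its
   adjoint: [X^* A X] is the compression of A to the coordinates f, while
   conjugating by the adjoint places a k x k matrix on those coordinates. *)
Definition embed_mx N k (f : 'I_k -> 'I_N) : SMat N k :=
  fun p i => if p == f i then C1 else C0.
Definition embed_adj_mx N k (f : 'I_k -> 'I_N) : SMat k N :=
  fun a i => if i == f a then C1 else C0.

Lemma congr_embed_mx N k (f : 'I_k -> 'I_N) (A : Mat Z N N) i j :
  congr_mx (embed_mx f) A i j = A (f i) (f j).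
Proof.
rewrite (congr_mx_bool (fun i p => p == f i)).
rewrite -(sum_delta (f i) (fun p => A p (f j))); apply: eq_bigr => p _.
by case: (p == f i) => /=; [rewrite sum_delta | rewrite big1].
Qed.

Lemma congr_embed_adj_mx_img N k (f : 'I_k -> 'I_N) (A : Mat Z k k) a b :
  injective f -> congr_mx (embed_adj_mx f) A (f a) (f b) = A a b.
Proof.
move=> finj; rewrite (congr_mx_bool (fun i p => i == f p)).
rewrite -(sum_delta a (fun p => A p b)); apply: eq_bigr => p _.
rewrite (inj_eq finj) eq_sym; case: (p == a) => /=; last by rewrite big1.
rewrite -(sum_delta b (fun q => A p q)); apply: eq_bigr => q _.
by rewrite (inj_eq finj) eq_sym.
Qed.

Lemma congr_embed_adj_mx_out N k (f : 'I_k -> 'I_N) (A : Mat Z k k) i j :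
  (forall a, (i == f a) = false) \/ (forall b, (j == f b) = false) ->
  congr_mx (embed_adj_mx f) A i j = 0.
Proof.
move=> out; rewrite (congr_mx_bool (fun i p => i == f p)).
by rewrite big1 // => p _; rewrite big1 // => q _; case: out => ->; rewrite ?andbF.
Qed.

Lemma dsum_congr_embed_adj n m (P : Mat Z n n) (Q : Mat Z m m) :
  dsum P Q = madd (congr_mx (embed_adj_mx (@lshift n m)) P)
                  (congr_mx (embed_adj_mx (@rshift n m)) Q).
Proof.
have linj := @lshift_inj n m; have rinj := @rshift_inj n m.
apply: mx_ext => i j; rewrite /madd /dsum -(splitK i) -(splitK j).
case: (split i) => a; case: (split j) => b /=; rewrite ?split_lshift ?split_rshift.
- rewrite congr_embed_adj_mx_img // (congr_embed_adj_mx_out (f := @rshift n m)) ?vaddr0 //.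
  by left => c; rewrite lshift_neq_rshift.
- rewrite (congr_embed_adj_mx_out (f := @rshift n m))
          ?(congr_embed_adj_mx_out (f := @lshift n m)) ?vadd0 //.
  + by right => c; rewrite eq_sym lshift_neq_rshift.
  + by left => c; rewrite lshift_neq_rshift.
- rewrite (congr_embed_adj_mx_out (f := @rshift n m))
          ?(congr_embed_adj_mx_out (f := @lshift n m)) ?vadd0 //.
  + by left => c; rewrite eq_sym lshift_neq_rshift.
  + by right => c; rewrite lshift_neq_rshift.
- rewrite congr_embed_adj_mx_img // (congr_embed_adj_mx_out (f := @lshift n m)) ?vadd0 //.
  by left => c; rewrite eq_sym lshift_neq_rshift.
Qed.

Lemma congr_embed_lshift_dsum n m (A : Mat Z n n) (B : Mat Z m m) :
  congr_mx (embed_mx (@lshift n m)) (dsum A B) = A.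
Proof. by apply: mx_ext => i j; rewrite congr_embed_mx /dsum !split_lshift. Qed.
Lemma congr_embed_rshift_dsum n m (A : Mat Z n n) (B : Mat Z m m) :
  congr_mx (embed_mx (@rshift n m)) (dsum A B) = B.
Proof. by apply: mx_ext => i j; rewrite congr_embed_mx /dsum !split_rshift. Qed.

Lemma dsum_madd n m (A P : Mat Z n n) (B Q : Mat Z m m) :
  madd (dsum A B) (dsum P Q) = dsum (madd A P) (madd B Q).
Proof.
apply: mx_ext => i j; rewrite /madd /dsum.
by case: (split i) => a; case: (split j) => b //=; exact: vadd0.
Qed.
End VectorSpace.

Lemma opnorm_sqr_le1 n k (X : SMat n k) :
  (forall v, cvnorm (smx_apply X v) <= cvnorm v) -> opnorm X ^ 2 <= 1.
Proof.
move=> contr.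
set E := fun r => exists v : 'I_k -> C, cvnorm v <= 1 /\ r = cvnorm (smx_apply X v).
have norm0 : cvnorm (fun _ : 'I_k => C0) = 0.
  by rewrite /cvnorm big1 ?sqrt_0 // => q _; exact: Cnorm2_0.
have E0 : E (cvnorm (smx_apply X (fun _ => C0))) by exists (fun _ => C0); rewrite norm0; lra.
have bndE : bound E by exists 1 => r [v [v1 ->]]; have := contr v; lra.
have [l lubE] := completeness E bndE (ex_intro _ _ E0).
have [ub lub] : is_lub E (opnorm X) by exact: (epsilon_spec _ _ (ex_intro _ l lubE)).
have le1 : opnorm X <= 1 by apply: lub => r [v [v1 ->]]; have := contr v; lra.
have ge0 : 0 <= opnorm X by apply: Rle_trans (ub _ E0); exact: sqrt_pos.
simpl; nra.
Qed.

Lemma smx_apply_embed_img N k (f : 'I_k -> 'I_N) v a :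
  injective f -> smx_apply (embed_mx f) v (f a) = v a.
Proof.
move=> finj; rewrite /smx_apply /embed_mx.
under eq_bigr => q _ do rewrite (inj_eq finj) eq_sym Cmul_bool.
by rewrite -big_mkcond big_pred1_eq.
Qed.

Lemma smx_apply_embed_out N k (f : 'I_k -> 'I_N) v p :
  (forall q, (p == f q) = false) -> smx_apply (embed_mx f) v p = C0.
Proof. by move=> out; rewrite /smx_apply /embed_mx big1 // => q _; rewrite out; apply: Cpair_eq => /=; ring. Qed.

Lemma cvnorm_embed_lshift n m v : cvnorm (smx_apply (embed_mx (@lshift n m)) v) = cvnorm v.
Proof.
rewrite /cvnorm big_split_ord /= [X in _ + X]big1 ?Rplus_0_r.
  by congr sqrt; apply: eq_bigr => q _; rewrite smx_apply_embed_img //; exact: lshift_inj.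
by move=> q _; rewrite smx_apply_embed_out ?Cnorm2_0 // => c; rewrite eq_sym lshift_neq_rshift.
Qed.

Lemma cvnorm_embed_rshift n m v : cvnorm (smx_apply (embed_mx (@rshift n m)) v) = cvnorm v.
Proof.
rewrite /cvnorm big_split_ord /= [X in X + _]big1 ?Rplus_0_l.
  by congr sqrt; apply: eq_bigr => q _; rewrite smx_apply_embed_img //; exact: rshift_inj.
by move=> q _; rewrite smx_apply_embed_out ?Cnorm2_0 // => c; rewrite lshift_neq_rshift.
Qed.

Lemma Un_cv_0_squeeze_inv_succ (u : nat -> R) :
  (forall k, 0 <= u k < / (INR k + 1)) -> Un_cv u 0.
Proof.
move=> bnd eps eps_gt0; have [N [invN N_gt0]] := archimed_cor1 eps eps_gt0.
exists N => k kN; rewrite /R_dist Rminus_0_r Rabs_pos_eq; last exact: (proj1 (bnd k)).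
have N_pos := lt_0_INR _ N_gt0.
have Nk : INR N <= INR k + 1 by have := le_INR _ _ kN; lra.
have := Rinv_le_contravar _ _ N_pos Nk; have := proj2 (bnd k); lra.
Qed.

Section NormalAccretiveOperatorSpace.
Variable Z : CVS.
Local Unset Implicit Arguments.
Variable K : forall n, Mat Z n n -> Prop.
Variable h : forall n, Mat Z n n -> R.
Local Set Implicit Arguments.
Hypothesis normalKh : normal_accretive_operator_space K h.

Lemma cone_add n x y : (0 < n)%N -> K n x -> K n y -> K n (madd x y).
Proof. by case: normalKh => [[[coneK _] _] _] n_gt0; exact: (proj1 (coneK n n_gt0)). Qed.
Lemma cone_scal n t x : (0 < n)%N -> 0 <= t -> K n x -> K n (mscal (RtoC t) x).
Proof. by case: normalKh => [[[coneK _] _] _] n_gt0; exact: (proj2 (coneK n n_gt0)). Qed.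
Lemma cone_congr n k (X : SMat n k) A : (0 < n)%N -> (0 < k)%N -> K n A -> K k (congr_mx X A).
Proof. by case: normalKh => [[[_ congrK] _] _]; exact: congrK. Qed.
Lemma cone_CProperP z :
  K 1%N z -> (exists w, K 1%N w /\ z = mscal (Copp C1) w) ->
  (exists w, K 1%N w /\ z = mscal Ci w) -> (exists w, K 1%N w /\ z = mscal (Copp Ci) w) ->
  z = @mzero Z 1%N.
Proof. by case: normalKh => [[_ CPK] _] *; apply/CPK. Qed.

(* The 1 x 1 zero lies in the cone by C-properness; compressing it gives 0_n. *)
Lemma cone0 n : (0 < n)%N -> K n (@mzero Z n).
Proof.
case: normalKh => [[_ CPK] _] n_gt0.
rewrite -(@congr_mx0 Z _ _ (fun (_ : 'I_1) (_ : 'I_n) => C0)).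
by apply: cone_congr => //; case: (CPK (@mzero Z 1)) => _ /(_ erefl) [].
Qed.

Lemma cone_closed n (zs : nat -> Mat Z n n) z : (0 < n)%N ->
  (forall k, K n (zs k)) -> Un_cv (fun k => h n (msub (zs k) z)) 0 -> K n z.
Proof. by case: normalKh => [_ [_ [closedK _]]]; exact: closedK. Qed.
Lemma h_normal n (x y w : Mat Z n n) : (0 < n)%N ->
  K n (msub y x) -> K n (msub w y) -> h n y <= Rmax (h n x) (h n w).
Proof. by case: normalKh => [_ [_ [_ normal]]]; exact: normal. Qed.
Lemma h_ge0 n x : (0 < n)%N -> 0 <= h n x.
Proof. by case: normalKh => [_ [[[[ge0 _] _] _] _]]; exact: ge0. Qed.
Lemma h_add n x y : (0 < n)%N -> h n (madd x y) <= h n x + h n y.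
Proof. by case: normalKh => [_ [[[[_ [add _]] _] _] _]]; exact: add. Qed.
Lemma h_congr n k (X : SMat n k) A : (0 < n)%N -> (0 < k)%N ->
  h k (congr_mx X A) <= opnorm X ^ 2 * h n A.
Proof. by case: normalKh => [_ [[[[_ [_ [_ [congr _]]]] _] _] _]]; exact: congr. Qed.
Lemma h_dsum n m A B : (0 < n)%N -> (0 < m)%N ->
  h (n + m)%N (dsum A B) = Rmax (h n A) (h m B).
Proof. by case: normalKh => [_ [[[[_ [_ [_ [_ dsum]]]] _] _] _]]; exact: dsum. Qed.
Lemma h_scal n t z : (0 < n)%N -> h n (mscal (RtoC t) z) = Rabs t * h n z.
Proof. by case: normalKh => [_ [[_ herm] _]]; exact: herm. Qed.

Lemma h_opp n z : (0 < n)%N -> h n (mopp z) = h n z.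
Proof.
rewrite moppE => n_gt0; have -> : Copp C1 = RtoC (-1) by apply: Cpair_eq => /=; ring.
by rewrite h_scal // Rabs_Ropp Rabs_R1 Rmult_1_l.
Qed.
Lemma h0 n : (0 < n)%N -> h n (@mzero Z n) = 0.
Proof. by move=> n_gt0; rewrite -(mscal0 (@mzero Z n)) h_scal // Rabs_R0 Rmult_0_l. Qed.

Local Notation nu := (nu_max K h).

Lemma nu_glb n (z : Mat Z n n) : (0 < n)%N ->
  is_glb (fun r => exists p, K n p /\ r = h n (madd z p)) (nu z).
Proof.
move=> n_gt0; apply: (@Rinf_glb _ 0); last by move=> r [p [_ ->]]; exact: h_ge0.
by exists (h n (madd z (@mzero Z n))), (@mzero Z n); split; first exact: cone0.
Qed.

Lemma nu_le n (z p : Mat Z n n) : (0 < n)%N -> K n p -> nu z <= h n (madd z p).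
Proof. by move=> n_gt0 Kp; apply: (proj1 (nu_glb z n_gt0)); exists p. Qed.

Lemma nu_ge n (z : Mat Z n n) b : (0 < n)%N ->
  (forall p, K n p -> b <= h n (madd z p)) -> b <= nu z.
Proof. by move=> n_gt0 lb; apply: (proj2 (nu_glb z n_gt0)) => r [p [Kp ->]]; exact: lb. Qed.

Lemma nu_approx n (z : Mat Z n n) e : (0 < n)%N -> 0 < e ->
  exists p, K n p /\ h n (madd z p) < nu z + e.
Proof. by move=> n_gt0 e_gt0; have [r [[p [Kp ->]] lt]] := glb_approx (nu_glb z n_gt0) e_gt0; exists p. Qed.

Lemma nu_ge0 n (z : Mat Z n n) : (0 < n)%N -> 0 <= nu z.
Proof. by move=> n_gt0; apply: nu_ge => // p _; exact: h_ge0. Qed.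

Lemma nu_ge_scaled n (z : Mat Z n n) a c : (0 < n)%N -> 0 <= c ->
  (forall p, K n p -> a <= c * h n (madd z p)) -> a <= c * nu z.
Proof.
move=> n_gt0 c_ge0 lb; apply: Rle_plus_epsilon => e e_gt0.
have d_gt0 : 0 < e / (c + 1) by apply: Rdiv_lt_0_compat; lra.
have [p [Kp near]] := nu_approx z n_gt0 d_gt0.
have cd : c * (e / (c + 1)) + e / (c + 1) = e by field; lra.
have := lb p Kp; have := Rmult_le_compat_l c _ _ c_ge0 (Rlt_le _ _ near); nra.
Qed.

Lemma nu_add n (x y : Mat Z n n) : (0 < n)%N -> nu (madd x y) <= nu x + nu y.
Proof.
move=> n_gt0; apply: Rle_plus_epsilon => e e_gt0.
have [p [Kp xp]] := nu_approx x n_gt0 (ltac:(lra) : 0 < e / 2).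
have [q [Kq yq]] := nu_approx y n_gt0 (ltac:(lra) : 0 < e / 2).
apply: Rle_trans (nu_le (madd x y) n_gt0 (cone_add n_gt0 Kp Kq)) _.
rewrite maddACA; have := h_add (madd x p) (madd y q) n_gt0; lra.
Qed.

Lemma nu_scal_le n t (x : Mat Z n n) : (0 < n)%N -> 0 <= t ->
  nu (mscal (RtoC t) x) <= t * nu x.
Proof.
move=> n_gt0 t_ge0; apply: nu_ge_scaled => // p Kp.
apply: Rle_trans (nu_le _ n_gt0 (cone_scal n_gt0 t_ge0 Kp)) _.
by rewrite -mscalDr h_scal // Rabs_pos_eq //; lra.
Qed.

Lemma nu_scal n t (x : Mat Z n n) : (0 < n)%N -> 0 <= t ->
  nu (mscal (RtoC t) x) = t * nu x.
Proof.
move=> n_gt0 t_ge0; apply: Rle_antisym; first exact: nu_scal_le.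
case: (Rle_lt_or_eq _ _ t_ge0) => [t_gt0|<-]; last first.
  by rewrite Rmult_0_l; exact: nu_ge0.
have tV : Cmul (RtoC (/ t)) (RtoC t) = C1 by apply: Cpair_eq => /=; field; lra.
have tV_ge0 : 0 <= / t by apply: Rlt_le; exact: Rinv_0_lt_compat.
rewrite -{1}(mscalK x tV); apply: Rle_trans (Rmult_le_compat_l _ _ _ (Rlt_le _ _ t_gt0)
  (nu_scal_le _ n_gt0 tV_ge0)) _.
by rewrite -Rmult_assoc Rinv_r ?Rmult_1_l; lra.
Qed.

Lemma nu_congr n k (X : SMat n k) (A : Mat Z n n) : (0 < n)%N -> (0 < k)%N ->
  nu (congr_mx X A) <= opnorm X ^ 2 * nu A.
Proof.
move=> n_gt0 k_gt0; apply: nu_ge_scaled => //; first exact: pow2_ge_0.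
move=> p Kp; apply: Rle_trans (nu_le _ k_gt0 (cone_congr X n_gt0 k_gt0 Kp)) _.
by rewrite -congr_mxDr; exact: h_congr.
Qed.

Lemma nu_dsum n m (A : Mat Z n n) (B : Mat Z m m) : (0 < n)%N -> (0 < m)%N ->
  nu (dsum A B) = Rmax (nu A) (nu B).
Proof.
move=> n_gt0 m_gt0; have nm_gt0 : (0 < n + m)%N by rewrite addn_gt0 n_gt0.
apply: Rle_antisym.
- apply: Rle_plus_epsilon => e e_gt0.
  have [p [Kp Ap]] := nu_approx A n_gt0 e_gt0.
  have [q [Kq Bq]] := nu_approx B m_gt0 e_gt0.
  have Kpq : K (n + m)%N (dsum p q).
    by rewrite dsum_congr_embed_adj; apply: cone_add => //; apply: cone_congr.
  apply: Rle_trans (nu_le (dsum A B) nm_gt0 Kpq) _.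
  rewrite dsum_madd h_dsum //; have := Rmax_l (nu A) (nu B); have := Rmax_r (nu A) (nu B).
  by move=> *; apply: Rmax_lub; lra.
- have compress_le k (X : SMat (n + m) k) : (0 < k)%N -> opnorm X ^ 2 <= 1 ->
      nu (congr_mx X (dsum A B)) <= nu (dsum A B).
    move=> k_gt0 X1; apply: Rle_trans (nu_congr X _ nm_gt0 k_gt0) _.
    by have := nu_ge0 (dsum A B) nm_gt0; nra.
  apply: Rmax_lub.
  + rewrite -{1}(congr_embed_lshift_dsum A B); apply: compress_le => //.
    by apply: opnorm_sqr_le1 => v; rewrite cvnorm_embed_lshift; lra.
  + rewrite -{1}(congr_embed_rshift_dsum A B); apply: compress_le => //.
    by apply: opnorm_sqr_le1 => v; rewrite cvnorm_embed_rshift; lra.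
Qed.

Lemma cone_nuN0 n (z : Mat Z n n) : (0 < n)%N -> K n z <-> nu (mopp z) = 0.
Proof.
move=> n_gt0; split=> [Kz | nuN0].
  apply: Rle_antisym; last exact: nu_ge0.
  by have := nu_le (mopp z) n_gt0 Kz; rewrite maddNr h0.
have approx k : exists p, K n p /\ h n (madd (mopp z) p) < / (INR k + 1).
  have k1_gt0 : 0 < / (INR k + 1) by apply: Rinv_0_lt_compat; have := pos_INR k; lra.
  by have := nu_approx (mopp z) n_gt0 k1_gt0; rewrite nuN0 Rplus_0_l.
have [zs zsP] := choice _ approx.
apply: (cone_closed (zs := zs)) => // [k|]; first exact: (proj1 (zsP k)).
apply: Un_cv_0_squeeze_inv_succ => k; rewrite msubE; split; first exact: h_ge0.
exact: (proj2 (zsP k)).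
Qed.

Lemma h_max_nu n (z : Mat Z n n) : (0 < n)%N -> h n z = Rmax (nu z) (nu (mopp z)).
Proof.
move=> n_gt0; apply: Rle_antisym.
- apply: Rle_plus_epsilon => e e_gt0.
  have [p [Kp zp]] := nu_approx z n_gt0 e_gt0.
  have [q [Kq zq]] := nu_approx (mopp z) n_gt0 e_gt0.
  have := h_normal (x := madd z (mopp q)) (y := z) (w := madd z p) n_gt0.
  rewrite msub_subKl msub_addKl => /(_ Kq Kp).
  have -> : h n (madd z (mopp q)) = h n (madd (mopp z) q)
    by rewrite -h_opp // moppD moppK.
  move/Rle_trans; apply; have := Rmax_l (nu z) (nu (mopp z)).
  by have := Rmax_r (nu z) (nu (mopp z)); move=> *; apply: Rmax_lub; lra.
- apply: Rmax_lub.
  + by have := nu_le z n_gt0 (cone0 n_gt0); rewrite maddr0.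
  + by have := nu_le (mopp z) n_gt0 (cone0 n_gt0); rewrite maddr0 h_opp.
Qed.

Lemma nu_CProper : gauge_CProper nu.
Proof.
move=> z nu1 nui nuN1 nuNi.
have witness a b : Cmul b (Copp a) = C1 -> nu (mscal a z) = 0 ->
    exists w, K 1%N w /\ z = mscal b w.
  move=> ba nu_az; exists (mopp (mscal a z)); split; last by rewrite mopp_mscal mscalK.
  by apply/cone_nuN0 => //; rewrite moppK.
apply: cone_CProperP.
- have [w [Kw ->]] : exists w, K 1%N w /\ z = mscal C1 w.
    by apply: (witness (Copp C1)) => //; apply: Cpair_eq => /=; ring.
  by rewrite mscal1.
- by apply: (witness C1); [apply: Cpair_eq => /=; ring | rewrite mscal1].
- by apply: (witness Ci) => //; apply: Cpair_eq => /=; ring.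
- by apply: (witness (Copp Ci)) => //; apply: Cpair_eq => /=; ring.
Qed.

Lemma nu_max_CProper_gauge : is_CProper_matrix_gauge nu.
Proof.
split; last exact: nu_CProper.
split; first by move=> n x; exact: nu_ge0.
split; first by move=> n x y; exact: nu_add.
split; first by move=> n t x; exact: nu_scal.
split; first by move=> n k X A; exact: nu_congr.
by move=> n m A B; exact: nu_dsum.
Qed.

Lemma nu_max_induces : induces nu K h.
Proof. by move=> n n_gt0; split=> z; [exact: cone_nuN0 | exact: h_max_nu]. Qed.

End NormalAccretiveOperatorSpace.

Theorem proposition5p3 (Z : CVS) (Zac : forall n, Mat Z n n -> Prop)
  (h : forall n, Mat Z n n -> R) :
  normal_accretive_operator_space Zac h ->
  is_CProper_matrix_gauge (nu_max Zac h) /\ induces (nu_max Zac h) Zac h.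
Proof. by move=> normal; split; [exact: nu_max_CProper_gauge | exact: nu_max_induces]. Qed.
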